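(* Let $\varphi$ be a quantifier-free formula in the SMT theory of bit-vectors and let $\mathit{cost}$ be a bit-vector variable of width $n$ occurring in $\varphi$, interpreted either as unsigned or as signed (two's complement). Consider the problem of minimizing (resp. maximizing) $\mathit{cost}$ subject to $\varphi$, i.e. finding a model $\mathcal{M}$ of $\varphi$ whose value $\mathcal{M}(\mathit{cost})$ is minimum (resp. maximum) among all models of $\varphi$ with respect to the unsigned order if $\mathit{cost}$ is unsigned and the signed (two's complement) order if $\mathit{cost}$ is signed. Let $\mathit{attr}$ be the attractor of $\mathit{cost}$ and $A=[A[0],\dots,A[n-1]]$ the vector of attractor equalities. Then any model $\mathcal{M}$ of $\varphi$ which lexicographically maximizes $A$ with respect to $\varphi$ is an optimal solution of this problem, i.e. $\mathcal{M}(\mathit{cost})$ is minimum (resp. maximum) among the values of $\mathit{cost}$ in models of $\varphi$.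
   Context: Bits of $\mathit{cost}$ are indexed from the most significant bit $\mathit{cost}[0]$ to the least significant bit $\mathit{cost}[n-1]$. An unsigned $n$-bit vector has value $\sum_{k=0}^{n-1}2^{n-1-k}\,\mathit{cost}[k]\in[0,2^n-1]$; a signed one has value $-2^{n-1}\mathit{cost}[0]+\sum_{k=1}^{n-1}2^{n-1-k}\mathit{cost}[k]\in[-2^{n-1},2^{n-1}-1]$. When minimizing (resp. maximizing), the attractor $\mathit{attr}$ is the smallest (resp. greatest) bit-vector value of the sort of $\mathit{cost}$ (e.g. $[0\dots0]$ for unsigned minimization, $[10\dots0]$ for signed minimization, $[1\dots1]$ for unsigned maximization, $[01\dots1]$ for signed maximization). The vector of attractor equalities is $A$ with $A[k]:=(\mathit{cost}[k]=\mathit{attr}[k])$ for $k\in[0..n-1]$. For an assignment $\tau_n$ to all bits of $\mathit{cost}$ and $i\le n$, $\tau_n|_i$ denotes its restriction to the bits $\mathit{cost}[0],\dots,\mathit{cost}[i-1]$ (viewed as a conjunction of bit literals). An assignment $\tau_n$ to $\mathit{cost}$ lexicographically maximizes $A$ with respect to $\varphi$ iff for every $k\in[0..n-1]$: $\tau_n[k]=\overline{\mathit{attr}[k]}$ (the complement bit) if $\varphi\wedge\tau_n|_k\wedge A[k]$ is unsatisfiable, and $\tau_n[k]=\mathit{attr}[k]$ otherwise. A model $\mathcal{M}$ of $\varphi$ lexicographically maximizes $A$ with respect to $\varphi$ iff its restriction to the bits of $\mathit{cost}$ does. *)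

From mathcomp Require Import all_boot all_order all_algebra.
Set Implicit Arguments. Unset Strict Implicit. Unset Printing Implicit Defensive.
Import Order.TTheory GRing.Theory Num.Theory.
Local Open Scope ring_scope.

(* A bit-vector of width n: bit k for k : 'I_n, bit 0 is the most significant. *)
Definition bv (n : nat) := 'I_n -> bool.

Definition uval (n : nat) (b : bv n) : int :=
  \sum_(k < n) (b k : nat)%:Z * 2 ^+ (n.-1 - k)%N.

Definition sval (n : nat) (b : bv n) : int :=
  \sum_(k < n) (if val k == 0%N then - ((b k : nat)%:Z * 2 ^+ n.-1)
                else (b k : nat)%:Z * 2 ^+ (n.-1 - k)%N).

Definition bvval (signed : bool) (n : nat) (b : bv n) : int :=
  if signed then sval b else uval b.

(* Attractor: smallest (resp. greatest) value of the sort of cost.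
   unsigned min: 0..0; signed min: 10..0; unsigned max: 1..1; signed max: 01..1 *)
Definition attr (signed maximize : bool) (n : nat) : bv n :=
  fun k => if val k == 0%N then (if signed then ~~ maximize else maximize)
           else maximize.

(* A quantifier-free bit-vector formula phi is represented by its semantics,
   the predicate "the assignment is a model of phi". *)
Definition assignment (V : Type) (w : V -> nat) := forall v : V, bv (w v).

(* Satisfiability of  phi /\ tau|_k /\ A[k]  where A[k] := (cost[k] = attr[k]). *)
Definition sat_prefix_attr (V : Type) (w : V -> nat)
    (phi : assignment w -> Prop) (cost : V) (signed maximize : bool)
    (tau : bv (w cost)) (k : 'I_(w cost)) : Prop :=
  exists M : assignment w,
    [/\ phi M,
        (forall j : 'I_(w cost), (j < k)%N -> M cost j = tau j) &
        M cost k = attr signed maximize k].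

Definition lexmax_assign (V : Type) (w : V -> nat)
    (phi : assignment w -> Prop) (cost : V) (signed maximize : bool)
    (tau : bv (w cost)) : Prop :=
  forall k : 'I_(w cost),
    (~ sat_prefix_attr phi signed maximize tau k ->
       tau k = ~~ attr signed maximize k) /\
    (sat_prefix_attr phi signed maximize tau k ->
       tau k = attr signed maximize k).

Definition lexmax_model (V : Type) (w : V -> nat)
    (phi : assignment w -> Prop) (cost : V) (signed maximize : bool)
    (M : assignment w) : Prop :=
  lexmax_assign phi signed maximize (M cost).

From mathcomp Require Import all_boot all_order all_algebra.
From mathcomp Require Import zify.
Set Implicit Arguments. Unset Strict Implicit. Unset Printing Implicit Defensive.
Import Order.TTheory GRing.Theory Num.Theory.
Local Open Scope ring_scope.

(* Let [agree b] be the bit-vector of attractor equalities [b[k] = attr[k]].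
   Flipping bit [k] away from [attr[k]] moves the cost by the weight of bit [k]
   in the wrong direction, so differences of costs are, up to the sign fixed by
   the optimization direction, differences of unsigned values of [agree].  The
   [agree] vector of a lexicographically maximal model dominates that of every
   other model lexicographically, hence in unsigned value. *)

Definition lex_le n (x y : bv n) : Prop :=
  forall k : 'I_n, (forall j : 'I_n, (j < k)%N -> x j = y j) -> x k ==> y k.

Lemma uval_ge0 n (b : bv n) : 0 <= uval b.
Proof. by apply: sumr_ge0 => k _; rewrite mulr_ge0 ?exprn_ge0. Qed.

Lemma uval_recl n (b : bv n.+1) :
  uval b = (b ord0 : nat)%:Z * 2 ^+ n + uval (fun j : 'I_n => b (lift ord0 j)).
Proof.
rewrite /uval big_ord_recl /= subn0; congr (_ + _).
apply: eq_bigr => j _; congr (_ * _ ^+ _).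
by case: n j b => [[]//|n] j b; rewrite /= /bump /=; lia.
Qed.

Lemma uval_lt n (b : bv n) : uval b < 2 ^+ n.
Proof.
elim: n b => [|n IH] b; first by rewrite /uval big_ord0.
have := IH (fun j => b (lift ord0 j)).
by rewrite uval_recl exprS; case: (b ord0) => /=; lia.
Qed.

Lemma uval_le_lex n (x y : bv n) : lex_le x y -> uval x <= uval y.
Proof.
elim: n x y => [|n IH] x y xy; first by rewrite /uval !big_ord0.
have xy0 : x ord0 ==> y ord0 by apply: xy => j; rewrite ltn0.
have [x0E | x0N] := eqVneq (x ord0) (y ord0).
  rewrite !uval_recl x0E lerD2l; apply: IH => k k_prefix.
  apply: xy => j; case: (unliftP ord0 j) => [j'|] ->; last by [].
  by rewrite /= /bump /=; move=> lt_jk; apply: k_prefix; lia.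
rewrite !uval_recl.
have := uval_lt (fun j => x (lift ord0 j)); have := uval_ge0 (fun j => y (lift ord0 j)).
by move: x0N xy0; case: (x ord0); case: (y ord0) => //= _ _; lia.
Qed.

Definition agree (signed maximize : bool) n (b : bv n) : bv n :=
  fun k => b k == attr signed maximize k.

Lemma bvvalB_agree (signed maximize : bool) n (b c : bv n) :
  bvval signed b - bvval signed c =
  (if maximize then 1 else -1) *
    (uval (agree signed maximize b) - uval (agree signed maximize c)).
Proof.
rewrite /bvval /uval /sval; case: signed; rewrite -!sumrB mulr_sumr.
all: apply: eq_bigr => k _; rewrite /agree /attr.
all: have [->|k_neq0] := eqVneq (nat_of_ord k) 0%N; rewrite ?subn0 ?(negbTE k_neq0).
all: move: (2 ^+ _) => e; case: (b k); case: (c k); case: maximize => /=; lia.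
Qed.

Lemma lexmax_agree_lex_le (V : Type) (w : V -> nat) (phi : assignment w -> Prop)
    (cost : V) (signed maximize : bool) (tau : bv (w cost)) (M' : assignment w) :
  lexmax_assign phi signed maximize tau -> phi M' ->
  lex_le (agree signed maximize (M' cost)) (agree signed maximize tau).
Proof.
move=> tau_lexmax phiM' k prefix; apply/implyP; rewrite /agree => /eqP M'k.
have sat_k : sat_prefix_attr phi signed maximize tau k.
  exists M'; split=> // j /prefix; rewrite /agree.
  by case: (M' cost j); case: (tau j); case: (attr _ _ j).
by rewrite ((tau_lexmax k).2 sat_k).
Qed.

Theorem theorem1 (V : Type) (w : V -> nat) (phi : assignment w -> Prop)
    (cost : V) (signed maximize : bool) (M : assignment w) :
  phi M ->
  lexmax_model phi cost signed maximize M ->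
  forall M' : assignment w, phi M' ->
    if maximize then bvval signed (M' cost) <= bvval signed (M cost)
    else bvval signed (M cost) <= bvval signed (M' cost).
Proof.
move=> _ M_lexmax M' phiM'.
have le_agree := uval_le_lex (lexmax_agree_lex_le M_lexmax phiM').
have := bvvalB_agree signed maximize (M' cost) (M cost).
by case: maximize le_agree {M_lexmax} => /=; lia.
Qed.
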